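(* If $\bar f_1,\dots,\bar f_k\in\mathbb{K}[S_M]$ is a regular sequence in $\mathbb{K}[S_M]$, then for each $i\le k$, the homogenization $\chi^{-1}(\bar f_i)$ is not a zero-divisor in $\mathbb{K}[S_M^h]/\chi^{-1}(\langle\bar f_1,\dots,\bar f_{i-1}\rangle)$, where $\chi^{-1}(J)$ denotes the ideal of $\mathbb{K}[S_M^h]$ generated by the homogenizations of all elements of the ideal $J$.
   Context: Let $\mathbb{K}$ be a field of characteristic $0$, $M\subset\mathbb{R}^n$ a polytope with $0\in M$, $S_M\subset\mathbb{Z}^n$ the affine semigroup generated by $M\cap\mathbb{Z}^n$ and $S_M^h\subset\mathbb{Z}^{n+1}$ the one generated by $\{(s,1):s\in M\cap\mathbb{Z}^n\}$, both assumed pointed. $\mathbb{K}[S]$ is the semigroup algebra with monomials $X^s$, $X^sX^t=X^{s+t}$. The affine degree $\delta^A(X^s)$ of a monomial of $\mathbb{K}[S_M]$ is the least $d\in\mathbb{N}$ with $(s,d)\in S_M^h$, and for $f=\sum c_sX^s\ne0$, $\delta^A(f)=\max\{\delta^A(X^s):c_s\ne0\}$. The homogenization of $f$ is $\chi^{-1}(f)=\sum c_sX^{(s,\delta^A(f))}\in\mathbb{K}[S_M^h]$. *)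

From HB Require Import structures.
From mathcomp Require Import all_boot all_order all_algebra.
From mathcomp Require Import reals.
From Stdlib Require Import ClassicalEpsilon.
Set Implicit Arguments. Unset Strict Implicit. Unset Printing Implicit Defensive.
Import Order.TTheory GRing.Theory Num.Theory.
Local Open Scope ring_scope.

Definition in_conv (R : realType) (n p : nat) (V : 'I_p -> 'rV[R]_n)
  (x : 'rV[R]_n) : Prop :=
  exists l : 'I_p -> R, (forall i, 0 <= l i) /\ \sum_i l i = 1 /\
    x = \sum_i l i *: V i.

Definition latpt (R : realType) (n p : nat) (V : 'I_p -> 'rV[R]_n)
  (u : 'rV[int]_n) : Prop := in_conv V (map_mx (fun z : int => z%:~R) u).

Definition in_sgrp (m : nat) (G : 'rV[int]_m -> Prop) (w : 'rV[int]_m) : Prop :=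
  exists s : seq 'rV[int]_m, (forall x, x \in s -> G x) /\ w = \sum_(x <- s) x.

Definition hpt (n : nat) (u : 'rV[int]_n) (d : nat) : 'rV[int]_(n + 1) :=
  row_mx u (\row_(j < 1) (d%:Z)).

Definition S_M (R : realType) (n p : nat) (V : 'I_p -> 'rV[R]_n) :=
  in_sgrp (latpt V).
Definition S_Mh (R : realType) (n p : nat) (V : 'I_p -> 'rV[R]_n) :=
  in_sgrp (fun w : 'rV[int]_(n + 1) => exists u, latpt V u /\ w = hpt u 1).

Definition pointed (m : nat) (S : 'rV[int]_m -> Prop) : Prop :=
  forall u, S u -> S (- u) -> u = 0.

(* ---------- semigroup algebras ----------
   An element of the group algebra K[Z^m] is represented by a finite formal
   sum  sum_j c_j X^(s_j), i.e. a list of (coefficient, exponent) pairs;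
   its coefficient of X^u is [coef f u].  Two representations denote the same
   element iff their coefficient functions agree.  K[S] is the set of those
   elements whose support lies in S. *)
Definition galg (K : fieldType) (m : nat) := seq (K * 'rV[int]_m).

Definition coef (K : fieldType) (m : nat) (f : galg K m) (u : 'rV[int]_m) : K :=
  \sum_(q <- f | q.2 == u) q.1.

Definition gmul (K : fieldType) (m : nat) (f g : galg K m) : galg K m :=
  [seq (a.1 * b.1, a.2 + b.2) | a <- f, b <- g].

Definition in_alg (K : fieldType) (m : nat) (S : 'rV[int]_m -> Prop)
  (f : galg K m) : Prop := forall u, coef f u != 0 -> S u.

Definition in_ideal (K : fieldType) (m : nat) (S : 'rV[int]_m -> Prop)
  (G : galg K m -> Prop) (h : galg K m) : Prop :=
  exists rs : seq (galg K m * galg K m),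
    (forall q, q \in rs -> in_alg S q.1 /\ G q.2) /\
    coef h =1 coef (flatten [seq gmul q.1 q.2 | q <- rs]).

Definition nzd_mod (K : fieldType) (m : nat) (S : 'rV[int]_m -> Prop)
  (G : galg K m -> Prop) (f : galg K m) : Prop :=
  forall g, in_alg S g -> in_ideal S G (gmul f g) -> in_ideal S G g.

Definition gone (K : fieldType) (m : nat) : galg K m := [:: (1, 0)].

Definition regular_seq (K : fieldType) (m : nat) (S : 'rV[int]_m -> Prop)
  (fs : seq (galg K m)) : Prop :=
  (forall f, f \in fs -> in_alg S f) /\
  (forall i, (i < size fs)%N ->
     nzd_mod S (fun g => g \in take i fs) (nth [::] fs i)) /\
  ~ in_ideal S (fun g => g \in fs) (gone K m).

Definition affdeg (R : realType) (n p : nat) (V : 'I_p -> 'rV[R]_n)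
  (s : 'rV[int]_n) : nat :=
  epsilon (inhabits 0%N)
    (fun d => S_Mh V (hpt s d) /\ forall d', S_Mh V (hpt s d') -> (d <= d')%N).

Definition supp_list (K : fieldType) (m : nat) (f : galg K m) : seq 'rV[int]_m :=
  [seq u <- undup [seq q.2 | q <- f] | coef f u != 0].

Definition affdeg_poly (R : realType) (K : fieldType) (n p : nat)
  (V : 'I_p -> 'rV[R]_n) (f : galg K n) : nat :=
  \max_(u <- supp_list f) affdeg V u.

Definition homog (R : realType) (K : fieldType) (n p : nat)
  (V : 'I_p -> 'rV[R]_n) (f : galg K n) : galg K (n + 1) :=
  [seq (coef f u, hpt u (affdeg_poly V f)) | u <- supp_list f].

Definition homog_ideal_gens (R : realType) (K : fieldType) (n p : nat)
  (V : 'I_p -> 'rV[R]_n) (G : galg K n -> Prop) : galg K (n + 1) -> Prop :=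
  fun h => exists g, in_ideal (S_M V) G g /\ h = homog V g.

(* Grade K[Z^(n+1)] by the last coordinate.  The homogenization F of f_i is
   homogeneous of degree delta^A(f_i), and forgetting the last coordinate of
   any homogeneous component of an element of chi^-1(J) gives an element of J.
   Hence if F g lies in chi^-1(J), then for every k the product of f_i with
   the dehomogenized degree-k component g_k of g lies in J, so by regularity
   the dehomogenization of g_k lies in J.  As 0 is in M, X^(0,1) lies in
   K[S_M^h], and g_k is X^(0, k - delta^A) times the homogenization of its
   dehomogenization; so every g_k, hence g, lies in chi^-1(J).  Components of
   negative degree vanish since S_M^h has nonnegative last coordinates. *)

From mathcomp Require Import all_boot all_order all_algebra.
From mathcomp Require Import boolp reals.
From Stdlib Require Import ClassicalEpsilon.
Set Implicit Arguments. Unset Strict Implicit. Unset Printing Implicit Defensive.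
Import Order.TTheory GRing.Theory Num.Theory.
Local Open Scope ring_scope.

Section Coefficients.
Variables (K : fieldType) (m : nat).
Implicit Types (f g h : galg K m) (u w : 'rV[int]_m).

Lemma coef_nil u : coef ([::] : galg K m) u = 0.
Proof. by rewrite /coef big_nil. Qed.

Lemma coef_cons (q : K * 'rV[int]_m) f u :
  coef (q :: f) u = (if q.2 == u then q.1 else 0) + coef f u.
Proof. by rewrite /coef big_cons; case: ifP; rewrite ?add0r. Qed.

Lemma coef_cat f g u : coef (f ++ g) u = coef f u + coef g u.
Proof. by rewrite /coef big_cat. Qed.

Lemma coef_flatten (L : seq (galg K m)) u :
  coef (flatten L) u = \sum_(l <- L) coef l u.
Proof.
elim: L => [|l L IH] /=; first by rewrite big_nil coef_nil.
by rewrite coef_cat IH big_cons.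
Qed.

Lemma mem_supp_list f u : (u \in supp_list f) = (coef f u != 0).
Proof.
rewrite mem_filter mem_undup andb_idr //; apply: contraNT => uNf; apply/eqP.
by rewrite /coef big1_seq // => q /andP[/eqP qu qf]; rewrite -qu map_f in uNf.
Qed.

Lemma sum_coef f (phi : 'rV[int]_m -> K) :
  \sum_(q <- f) q.1 * phi q.2 = \sum_(w <- supp_list f) coef f w * phi w.
Proof.
rewrite /supp_list big_filter [RHS]big_mkcond /=.
under [RHS]eq_bigr => w _.
  rewrite (_ : (if _ then _ else _) = coef f w * phi w);
    last by case: eqP => // ->; rewrite mul0r.
  rewrite /coef big_distrl big_mkcond /=.
  over.
rewrite exchange_big /=; apply: eq_big_seq => q qf.
rewrite -big_mkcond /= (eq_bigl (pred1 q.2)) => [|w]; last by rewrite eq_sym.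
rewrite -big_filter filter_pred1_uniq ?undup_uniq ?mem_undup ?map_f //.
by rewrite big_seq1.
Qed.

Lemma coef_gmul_l f g u :
  coef (gmul f g) u = \sum_(x <- f) x.1 * coef g (u - x.2).
Proof.
rewrite /coef /gmul big_mkcond big_allpairs_dep /=.
apply: eq_bigr => x _; rewrite mulr_sumr [RHS]big_mkcond /=.
apply: eq_bigr => y _; rewrite [y.2 == _]eq_sym subr_eq addrC eq_sym.
by case: ifP; rewrite ?mulr0.
Qed.

Lemma gmulC f g u : coef (gmul f g) u = coef (gmul g f) u.
Proof.
rewrite /coef /gmul [LHS]big_mkcond [RHS]big_mkcond !big_allpairs_dep /=.
rewrite exchange_big /=.
by apply: eq_bigr => x _; apply: eq_bigr => y _; rewrite mulrC addrC.
Qed.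

Lemma coef_gmul_r f g u :
  coef (gmul f g) u = \sum_(y <- g) y.1 * coef f (u - y.2).
Proof. by rewrite gmulC coef_gmul_l. Qed.

Lemma eq_coef_gmulr f g g' :
  coef g =1 coef g' -> coef (gmul f g) =1 coef (gmul f g').
Proof. by move=> E u; rewrite !coef_gmul_l; apply: eq_bigr => x _; rewrite E. Qed.

Lemma gmulA f g h u :
  coef (gmul f (gmul g h)) u = coef (gmul (gmul f g) h) u.
Proof.
rewrite coef_gmul_l coef_gmul_r.
under eq_bigr => x _ do rewrite coef_gmul_r mulr_sumr.
under [RHS]eq_bigr => z _ do rewrite coef_gmul_l mulr_sumr.
rewrite exchange_big; apply: eq_bigr => z _; apply: eq_bigr => x _.
by rewrite mulrCA addrAC.
Qed.

Lemma coef_gmul_flatten f (L : seq (galg K m)) u :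
  coef (gmul f (flatten L)) u = \sum_(l <- L) coef (gmul f l) u.
Proof.
rewrite coef_gmul_l.
under eq_bigr => x _ do rewrite coef_flatten mulr_sumr.
by rewrite exchange_big; apply: eq_bigr => l _; rewrite coef_gmul_l.
Qed.

End Coefficients.

Lemma sum_neq0_exists (M : nmodType) (I : eqType) (r : seq I) (F : I -> M) :
  \sum_(i <- r) F i != 0 -> exists2 i, i \in r & F i != 0.
Proof.
move=> nz; have /allPn[i ir Fi] : ~~ all (fun i => F i == 0) r.
  by apply: contra nz => /allP F0; rewrite big1_seq // => i /andP[_ /F0/eqP].
by exists i.
Qed.

Lemma in_sgrpD m (G : 'rV[int]_m -> Prop) a b :
  in_sgrp G a -> in_sgrp G b -> in_sgrp G (a + b).
Proof.
move=> [s [Gs ->]] [t [Gt ->]]; exists (s ++ t); split; last by rewrite big_cat.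
by move=> x; rewrite mem_cat => /orP[/Gs|/Gt].
Qed.

Section Ideals.
Variables (K : fieldType) (m : nat) (S : 'rV[int]_m -> Prop).
Hypothesis S_add : forall a b, S a -> S b -> S (a + b).
Variable G : galg K m -> Prop.
Implicit Types f g h : galg K m.

Lemma in_alg_gmul f g : in_alg S f -> in_alg S g -> in_alg S (gmul f g).
Proof.
move=> Sf Sg u; rewrite coef_gmul_l (sum_coef f (fun w => coef g (u - w))).
case/sum_neq0_exists => w _ /[!mulf_eq0] /norP[/Sf Sw /Sg Suw].
by rewrite -(subrK w u) addrC; apply: S_add.
Qed.

Lemma in_ideal_eq h h' : coef h =1 coef h' -> in_ideal S G h' -> in_ideal S G h.
Proof. by move=> E [rs [Hrs Eh']]; exists rs; split => // u; rewrite E Eh'. Qed.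

Lemma in_ideal_nil : in_ideal S G [::].
Proof. by exists [::]. Qed.

Lemma in_ideal_cat h1 h2 :
  in_ideal S G h1 -> in_ideal S G h2 -> in_ideal S G (h1 ++ h2).
Proof.
move=> [r1 [H1 E1]] [r2 [H2 E2]]; exists (r1 ++ r2); split.
  by move=> q; rewrite mem_cat => /orP[/H1|/H2].
by move=> u; rewrite map_cat flatten_cat !coef_cat E1 E2.
Qed.

Lemma in_ideal_flatten (T : eqType) (r : seq T) (F : T -> galg K m) :
  (forall x, x \in r -> in_ideal S G (F x)) -> in_ideal S G (flatten (map F r)).
Proof.
elim: r => [|x r IH] IF /=; first exact: in_ideal_nil.
apply: in_ideal_cat; first exact/IF/mem_head.
by apply: IH => y yr; apply: IF; rewrite inE yr orbT.
Qed.

Lemma in_ideal_gmul f h : in_alg S f -> in_ideal S G h -> in_ideal S G (gmul f h).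
Proof.
move=> Sf [rs [Hrs Eh]]; exists [seq (gmul f q.1, q.2) | q <- rs]; split.
  move=> _ /mapP[q qrs ->] /=; have [Sq1 Gq2] := Hrs q qrs.
  by split => //; apply: in_alg_gmul.
move=> u; rewrite (eq_coef_gmulr f Eh) coef_gmul_flatten coef_flatten -map_comp.
by rewrite !big_map; apply: eq_bigr => q _; apply: gmulA.
Qed.

End Ideals.

Definition hdeg n (v : 'rV[int]_(n + 1)) : int := v 0 (rshift n 0).

Definition hptz n (u : 'rV[int]_n) (c : int) : 'rV[int]_(n + 1) :=
  row_mx u (\row_(j < 1) c).

Section HomogeneousPoints.
Variable n : nat.
Implicit Types (u w : 'rV[int]_n) (v : 'rV[int]_(n + 1)).

Lemma hpt_hptz u (d : nat) : hpt u d = hptz u d.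
Proof. by []. Qed.

Lemma hdeg_hptz u c : hdeg (hptz u c) = c.
Proof. by rewrite /hdeg /hptz row_mxEr mxE. Qed.

Lemma lsubmx_hptz u c : lsubmx (hptz u c) = u.
Proof. exact: row_mxKl. Qed.

Lemma hptz_lsubmx v : hptz (lsubmx v) (hdeg v) = v.
Proof.
rewrite -[RHS](hsubmxK v) /hptz; congr row_mx.
by apply/matrixP => i j; rewrite !ord1 !mxE.
Qed.

Lemma eq_hptz u w c d : (hptz u c == hptz w d) = (u == w) && (c == d).
Proof.
apply/eqP/andP => [E|[/eqP-> /eqP->]] //.
have := congr1 lsubmx E; have := congr1 (@hdeg n) E.
by rewrite !hdeg_hptz !lsubmx_hptz => -> ->.
Qed.

Lemma hptzD u w c d : hptz u c + hptz w d = hptz (u + w) (c + d).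
Proof.
rewrite /hptz add_row_mx; congr row_mx.
by apply/matrixP => i j; rewrite !mxE.
Qed.

Lemma hptzB u w c d : hptz u c - hptz w d = hptz (u - w) (c - d).
Proof.
rewrite /hptz opp_row_mx add_row_mx; congr row_mx.
by apply/matrixP => i j; rewrite !mxE.
Qed.

Lemma hdegD v v' : hdeg (v + v') = hdeg v + hdeg v'.
Proof. by rewrite /hdeg mxE. Qed.

End HomogeneousPoints.

Section GradedComponents.
Variables (K : fieldType) (n : nat).
Implicit Types (h : galg K (n + 1)) (c : int).

Definition hcomp c h : galg K (n + 1) := [seq q <- h | hdeg q.2 == c].

Definition dehom h : galg K n := [seq (q.1, lsubmx q.2) | q <- h].

Lemma coef_hcomp c h v : coef (hcomp c h) v = if hdeg v == c then coef h v else 0.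
Proof.
rewrite /coef /hcomp big_filter_cond; case: ifP => vc.
  by apply: eq_bigl => q; case: (q.2 =P v) => [->|]; rewrite ?vc ?andbF.
by rewrite big_pred0 // => q; case: (q.2 =P v) => [->|]; rewrite ?vc ?andbF.
Qed.

Lemma coef_dehom_hcomp c h u : coef (dehom (hcomp c h)) u = coef h (hptz u c).
Proof.
rewrite /coef /dehom big_map big_filter_cond /=; apply: eq_bigl => q.
by rewrite -[q.2 in RHS]hptz_lsubmx eq_hptz andbC.
Qed.

Lemma dehom_hcomp_flatten c (L : seq (galg K (n + 1))) :
  dehom (hcomp c (flatten L)) = flatten [seq dehom (hcomp c l) | l <- L].
Proof. by rewrite /dehom /hcomp filter_flatten map_flatten -!map_comp. Qed.

Lemma coef_hcomp_sum h :
  coef h =1 coef (flatten [seq hcomp d h | d <- undup [seq hdeg q.2 | q <- h]]).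
Proof.
move=> v; rewrite coef_flatten big_map.
under eq_bigr => d _ do rewrite coef_hcomp.
have [vh|vNh] := boolP (hdeg v \in undup [seq hdeg q.2 | q <- h]).
  rewrite (bigD1_seq (hdeg v)) ?undup_uniq //= eqxx big1 ?addr0 // => d.
  by rewrite eq_sym => /negbTE->.
rewrite big1_seq => [|d /andP[_ dh]]; last by case: eqP => // vd; rewrite vd dh in vNh.
rewrite /coef big1_seq // => q /andP[/eqP qv qh].
by rewrite mem_undup -qv (map_f (fun q => hdeg q.2)) in vNh.
Qed.

Lemma in_ideal_hcomp S G h :
  (forall d, in_ideal S G (hcomp d h)) -> in_ideal S G h.
Proof.
move=> Gh; apply: in_ideal_eq (coef_hcomp_sum h) _.
by apply: in_ideal_flatten => d _; apply: Gh.
Qed.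

End GradedComponents.

Section Homogenization.
Variables (R : realType) (K : fieldType) (n p : nat) (V : 'I_p -> 'rV[R]_n).
Implicit Types (f g : galg K n) (a h : galg K (n + 1)).

Lemma coef_homog f v :
  coef (homog V f) v =
  if hdeg v == (affdeg_poly V f)%:Z then coef f (lsubmx v) else 0.
Proof.
rewrite [LHS]/coef /homog big_map /=.
rewrite -{1}[v]hptz_lsubmx.
under eq_bigl => u do rewrite hpt_hptz eq_hptz [_ == hdeg v]eq_sym.
case: ifP => vdeg; last by rewrite big_pred0 // => u; rewrite andbF.
under eq_bigl => u do rewrite andbT.
have [vf|vNf] := boolP (lsubmx v \in supp_list f).
  by rewrite -big_filter filter_pred1_uniq ?big_seq1 ?filter_uniq ?undup_uniq.
rewrite big1_seq => [|u /andP[/eqP -> uf]]; last by rewrite uf in vNf.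
by move: vNf; rewrite mem_supp_list negbK => /eqP.
Qed.

Lemma coef_dehom_hcomp_homog_gmul f a e :
  coef (dehom (hcomp e (gmul (homog V f) a))) =1
  coef (gmul f (dehom (hcomp (e - (affdeg_poly V f)%:Z) a))).
Proof.
move=> w; rewrite coef_dehom_hcomp !coef_gmul_l /homog big_map.
rewrite (sum_coef f (fun u => coef (dehom (hcomp _ a)) (w - u))) /=.
by apply: eq_bigr => u _; rewrite coef_dehom_hcomp hpt_hptz hptzB.
Qed.

Lemma S_Mh_lsubmx v : S_Mh V v -> S_M V (lsubmx v).
Proof.
move=> [s [Ss ->]]; exists [seq lsubmx x | x <- s]; split.
  by move=> _ /mapP[x xs ->]; have [u [Mu ->]] := Ss x xs; rewrite lsubmx_hptz.
by rewrite raddf_sum big_map.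
Qed.

Lemma S_Mh_hdeg_ge0 v : S_Mh V v -> 0 <= hdeg v.
Proof.
move=> [s [Ss ->]]; rewrite big_seq; apply: (big_ind (fun x => 0 <= hdeg x)).
- by rewrite /hdeg mxE.
- by move=> x y; rewrite hdegD; apply: addr_ge0.
by move=> x /Ss[u [_ ->]]; rewrite hpt_hptz hdeg_hptz.
Qed.

Lemma S_Mh_hpt0 (d : nat) : in_conv V 0 -> S_Mh V (hpt 0 d).
Proof.
move=> M0; exists (nseq d (hpt 0 1)); split.
  move=> x /nseqP[-> _]; exists 0; split => //.
  by rewrite /latpt (_ : map_mx _ 0 = 0) //; apply/matrixP => i j; rewrite !mxE.
rewrite big_nseq; elim: d => [|d IHd] /=.
  by rewrite /hpt -row_mx0; congr row_mx; apply/matrixP => i j; rewrite !mxE.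
by rewrite -IHd !hpt_hptz hptzD addr0 -PoszD add1n.
Qed.

Lemma affdeg_le u (d : nat) : S_Mh V (hpt u d) -> (affdeg V u <= d)%N.
Proof.
move=> Sud; have [e /asboolP Sue e_min] :=
  ex_minnP (ex_intro (fun e => `[< S_Mh V (hpt u e) >]) d (asboolT Sud)).
have [_ affdeg_min] := epsilon_spec (inhabits 0%N)
  (fun e => S_Mh V (hpt u e) /\ forall e', S_Mh V (hpt u e') -> (e <= e')%N)
  (ex_intro _ e (conj Sue (fun e' Sue' => e_min e' (asboolT Sue')))).
exact: affdeg_min.
Qed.

Lemma in_alg_dehom_hcomp c h :
  in_alg (S_Mh V) h -> in_alg (S_M V) (dehom (hcomp c h)).
Proof. by move=> Sh u; rewrite coef_dehom_hcomp => /Sh/S_Mh_lsubmx; rewrite lsubmx_hptz. Qed.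

Lemma in_ideal_dehom_hcomp (G : galg K n -> Prop) c h :
  in_ideal (S_Mh V) (homog_ideal_gens V G) h -> in_ideal (S_M V) G (dehom (hcomp c h)).
Proof.
move=> [rs [Hrs Eh]].
apply: (in_ideal_eq (h' := dehom (hcomp c (flatten [seq gmul q.1 q.2 | q <- rs])))).
  by move=> w; rewrite !coef_dehom_hcomp Eh.
rewrite dehom_hcomp_flatten -map_comp.
apply: in_ideal_flatten => q /Hrs[Sq1 [g [Jg q2E]]] /=; rewrite q2E.
apply: (in_ideal_eq (h' := gmul (dehom (hcomp (c - (affdeg_poly V g)%:Z) q.1)) g)).
  move=> w; rewrite gmulC -coef_dehom_hcomp_homog_gmul !coef_dehom_hcomp.
  exact: gmulC.
apply: in_ideal_gmul => //; last exact: in_alg_dehom_hcomp.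
by move=> *; apply: in_sgrpD.
Qed.

Lemma hcomp_Negz h k : in_alg (S_Mh V) h -> coef (hcomp (Negz k) h) =1 coef [::].
Proof.
move=> Sh v; rewrite coef_hcomp coef_nil; case: eqP => // vk.
by apply/eqP; apply: contraT => /Sh/S_Mh_hdeg_ge0; rewrite vk.
Qed.

Lemma in_homog_ideal_hcomp (G : galg K n -> Prop) h (k : nat) :
  in_conv V 0 -> in_alg (S_Mh V) h -> in_ideal (S_M V) G (dehom (hcomp k h)) ->
  in_ideal (S_Mh V) (homog_ideal_gens V G) (hcomp k h).
Proof.
move=> M0 Sh Jg; set g := dehom (hcomp k h); set d := affdeg_poly V g.
have le_dk : (d <= k)%N.
  apply/bigmax_leqP_seq => u; rewrite mem_supp_list coef_dehom_hcomp => /Sh Su _.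
  exact: affdeg_le.
exists [:: ([:: (1, hpt 0 (k - d))], homog V g)]; split.
  move=> q /[!inE] /eqP-> /=; split; last by exists g.
  move=> u; rewrite coef_cons coef_nil addr0.
  by case: ifP => [/eqP <- _|_]; [exact: S_Mh_hpt0 | rewrite eqxx].
move=> v /=; rewrite cats0 coef_gmul_l big_seq1 mul1r coef_homog coef_hcomp /=.
rewrite -[v in v - _]hptz_lsubmx hpt_hptz hptzB subr0 hdeg_hptz lsubmx_hptz.
rewrite coef_dehom_hcomp subr_eq -PoszD subnKC //.
by case: ifP => // /eqP <-; rewrite hptz_lsubmx.
Qed.

End Homogenization.

Unset Implicit Arguments.

Theorem mainTheorem11 (R : realType) (K : fieldType) (n p : nat)
  (V : 'I_p -> 'rV[R]_n) (fs : seq (galg K n)) :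
  [pchar K] =i pred0 ->
  in_conv V 0 ->
  pointed (S_M V) ->
  pointed (S_Mh V) ->
  regular_seq (S_M V) fs ->
  forall i, (i < size fs)%N ->
    nzd_mod (S_Mh V) (homog_ideal_gens V (fun g => g \in take i fs))
      (homog V (nth [::] fs i)).
Proof.
move=> _ M0 _ _ [_ [fs_reg _]] i lt_i_fs g Sg Fg.
apply: in_ideal_hcomp => -[k|k]; last first.
  exact: in_ideal_eq (hcomp_Negz _ Sg) (in_ideal_nil _ _).
apply: in_homog_ideal_hcomp => //; apply: (fs_reg i lt_i_fs).
  exact: in_alg_dehom_hcomp.
set f := nth [::] fs i.
apply: in_ideal_eq _ (in_ideal_dehom_hcomp (k%:Z + (affdeg_poly V f)%:Z) Fg).
by move=> u; rewrite coef_dehom_hcomp_homog_gmul addrK.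
Qed.
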